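(* Let $G=(V,E)$ be a simple connected graph with $n=|V|\ge 2$ vertices and diameter $d=\mathrm{diam}(G)$. Then the pebbling number of $G$ satisfies $$f(G) \leq \left(n + \left\lfloor \frac{n-1}{d} \right\rfloor - 1\right) 2^{d-1} - n + 2.$$
   Context: A distribution of pebbles on $G$ is a function $D: V \to \mathbb{N}=\{0,1,2,\dots\}$; its size is $|D|=\sum_{v\in V} D(v)$. A pebbling step removes two pebbles from some vertex and places one pebble on an adjacent vertex. For a root vertex $v$, $D$ is $v$-solvable if, after some finite sequence of pebbling steps starting from $D$, at least one pebble is on $v$; $D$ is solvable if it is $v$-solvable for every $v\in V$. The pebbling number $f(G)$ is the smallest integer $N$ such that every distribution of size $N$ on $G$ is solvable. *)

From mathcomp Require Import all_boot.
Set Implicit Arguments. Unset Strict Implicit. Unset Printing Implicit Defensive.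

Definition simple_graph (T : finType) (e : rel T) : Prop :=
  symmetric e /\ irreflexive e.

Definition connected_graph (T : finType) (e : rel T) : Prop :=
  forall u v : T, connect e u v.

Definition walk_len (T : finType) (e : rel T) (k : nat) (u v : T) : bool :=
  [exists p : k.-tuple T, path e u p && (last u p == v)].

(* graph distance: least k with a walk of length k (a shortest walk has
   length < #|T| in a connected graph; returns #|T| if none exists) *)
Definition dist (T : finType) (e : rel T) (u v : T) : nat :=
  find (fun k => walk_len e k u v) (iota 0 #|T|).

Definition diam (T : finType) (e : rel T) : nat :=
  \max_(u : T) \max_(v : T) dist e u v.

Definition distribution (T : finType) := {ffun T -> nat}.

Definition dsize (T : finType) (D : distribution T) : nat := \sum_(v : T) D v.

Definition pebble_step (T : finType) (e : rel T) (D D' : distribution T) : Prop :=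
  exists u w : T, [/\ e u w, 2 <= D u &
    D' = [ffun x => if x == w then (D x - (x == u) * 2) + 1
                    else D x - (x == u) * 2]].

Inductive reachable (T : finType) (e : rel T) : distribution T -> distribution T -> Prop :=
| reach_refl D : reachable e D D
| reach_step D D' D'' : pebble_step e D D' -> reachable e D' D'' -> reachable e D D''.

Definition rooted_solvable (T : finType) (e : rel T) (D : distribution T) (r : T) : Prop :=
  exists D', reachable e D D' /\ 1 <= D' r.

Definition solvable (T : finType) (e : rel T) (D : distribution T) : Prop :=
  forall r : T, rooted_solvable e D r.

Definition all_solvable (T : finType) (e : rel T) (N : nat) : Prop :=
  forall D : distribution T, dsize D = N -> solvable e D.

(* f(G) <= B, where f(G) is the least N with all_solvable N *)
Definition pebbling_number_le (T : finType) (e : rel T) (B : nat) : Prop :=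
  exists N, N <= B /\ all_solvable e N.

From mathcomp Require Import all_boot zify.
From Stdlib Require Import Classical.

(* Suppose a distribution D of the given size cannot reach the root r.  Then
   D r = 0 and every vertex v holds fewer than 2^dist(v,r) pebbles.  Call v
   heavy if it holds at least 2^(d-1) pebbles; a heavy vertex is at distance
   exactly d from r.  Fix a geodesic from each heavy vertex to r: its first d
   vertices avoid r and are pairwise distinct, and the geodesics of two heavy
   vertices are disjoint, since at a common vertex their pebbles, pushed along
   the geodesics, would add up to enough to reach r.  Hence
   #heavy * d <= n - 1, and summing the bounds on D v gives
   |D| <= (n - 1)(2^(d-1) - 1) + floor((n-1)/d) 2^(d-1), one less than the bound. *)

Set Implicit Arguments.
Unset Strict Implicit.
Unset Printing Implicit Defensive.

Section Moves.
Variables (T : finType) (e : rel T).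

Definition dadd (D E : distribution T) : distribution T := [ffun x => D x + E x].

Definition pile (u : T) (a : nat) : distribution T := [ffun x => if x == u then a else 0].

Definition deliverable (D : distribution T) (v : T) (m : nat) : Prop :=
  exists D', reachable e D D' /\ m <= D' v.

Lemma daddC D E : dadd D E = dadd E D.
Proof. by apply/ffunP=> x; rewrite !ffunE addnC. Qed.

Lemma reachable_trans D1 D2 D3 :
  reachable e D1 D2 -> reachable e D2 D3 -> reachable e D1 D3.
Proof. by elim=> // A B C AB _ IH /IH; apply: reach_step. Qed.

Lemma reachable_dadd D D' E : reachable e D D' -> reachable e (dadd D E) (dadd D' E).
Proof.
elim=> [A | A B C [u [w [uw A2 ->]]] _ IH]; first exact: reach_refl.
apply: reach_step IH; exists u, w; split=> //; first by rewrite ffunE; lia.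
apply/ffunP=> x; rewrite !ffunE.
by case: (x =P w) => _; case: (x =P u) => [->|_] /=; lia.
Qed.

Lemma deliverable_reachable D D' v m :
  reachable e D D' -> deliverable D' v m -> deliverable D v m.
Proof. by move=> DD' [D'' [/(reachable_trans DD') ? ?]]; exists D''. Qed.

Lemma deliverable_mono (D E : distribution T) v m :
  (forall x, E x <= D x) -> deliverable E v m -> deliverable D v m.
Proof.
move=> ED [E' [EE' mE']].
have -> : D = dadd E [ffun x => D x - E x].
  by apply/ffunP=> x; rewrite !ffunE; have := ED x; lia.
exists (dadd E' [ffun x => D x - E x]); split; first exact: reachable_dadd.
by rewrite ffunE; lia.
Qed.

Lemma deliverable_dadd D E y m1 m2 :
  deliverable D y m1 -> deliverable E y m2 -> deliverable (dadd D E) y (m1 + m2).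
Proof.
move=> [D' [DD' m1D']] [E' [EE' m2E']].
exists (dadd E' D'); split; last by rewrite ffunE; lia.
apply: reachable_trans (reachable_dadd E DD') _.
by rewrite daddC; apply: reachable_dadd.
Qed.

Lemma pile_le (D : distribution T) v a : a <= D v -> forall x, pile v a x <= D x.
Proof. by move=> aD x; rewrite ffunE; case: (x =P v) => [->|]. Qed.

Lemma dadd_pile_le (D : distribution T) v w a b : v != w ->
  a <= D v -> b <= D w -> forall x, dadd (pile v a) (pile w b) x <= D x.
Proof.
move=> vw aD bD x; rewrite !ffunE.
case: (x =P v) => [->|_]; first by rewrite (negbTE vw) addn0.
by rewrite add0n; case: (x =P w) => [->|].
Qed.

Hypothesis e_irr : irreflexive e.

Lemma reachable_pile_edge u w a : e u w -> reachable e (pile u (2 * a)) (pile w a).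
Proof.
move=> uw; have wu : (w == u) = false by apply/eqP=> wu; rewrite wu e_irr in uw.
elim: a => [|a IH].
  have -> : pile u (2 * 0) = pile w 0.
    by apply/ffunP=> x; rewrite !ffunE; case: ifP; case: ifP.
  exact: reach_refl.
have step : pebble_step e (pile u (2 * a.+1)) (dadd (pile u (2 * a)) (pile w 1)).
  exists u, w; split=> //; first by rewrite ffunE eqxx; lia.
  apply/ffunP=> x; rewrite !ffunE.
  case: (x =P w) => [->|_]; first by rewrite wu /=; lia.
  by case: (x =P u) => _ /=; lia.
apply: reach_step step _.
have -> : pile w a.+1 = dadd (pile w a) (pile w 1).
  by apply/ffunP=> x; rewrite !ffunE; case: ifP => //; lia.
exact: reachable_dadd.
Qed.

Lemma deliverable_path u p m :
  path e u p -> deliverable (pile u (m * 2 ^ size p)) (last u p) m.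
Proof.
elim: p u => [|w p IH] u /=.
  by exists (pile u (m * 1)); split; [exact: reach_refl | rewrite ffunE eqxx muln1].
case/andP=> uw /IH; apply: deliverable_reachable.
by rewrite expnS mulnCA; apply: reachable_pile_edge.
Qed.

(* The piles at v and w bring 2^(c - |p|) + 2^(c - |q|) >= 2^(k+1) pebbles to y,
   enough to push one pebble along s. *)
Lemma deliverable_merge (D : distribution T) v w y p q s c k :
  v != w -> path e v p -> last v p = y -> path e w q -> last w q = y ->
  path e y s -> size p <= size q -> size q + k = c -> size s = k.+1 ->
  2 ^ c <= D v -> 2 ^ c <= D w -> deliverable D (last y s) 1.
Proof.
move=> vw vp vpy wq wqy ys pq qc sk Dv Dw.
have Ev : 2 ^ (c - size p) * 2 ^ size p = 2 ^ c by rewrite -expnD subnK //; lia.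
have Ew : 2 ^ k * 2 ^ size q = 2 ^ c by rewrite -expnD; congr (2 ^ _); lia.
have kp : 2 ^ k <= 2 ^ (c - size p) by apply: leq_pexp2l => //; lia.
have Mv := deliverable_path (2 ^ (c - size p)) vp; rewrite vpy Ev in Mv.
have Mw := deliverable_path (2 ^ k) wq; rewrite wqy Ew in Mw.
have [Dy [Dreach Dyy]] := deliverable_dadd Mv Mw.
apply: deliverable_mono (dadd_pile_le vw Dv Dw) _.
apply: deliverable_reachable Dreach _.
apply: deliverable_mono (deliverable_path 1 ys).
by apply: pile_le; rewrite sk expnS; lia.
Qed.

End Moves.

Section Geodesics.
Variables (T : finType) (e : rel T).

Definition geodesic (u : T) (p : seq T) : bool :=
  path e u p && (size p == dist e u (last u p)).

Lemma dist_le_size u p : path e u p -> dist e u (last u p) <= size p.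
Proof.
move=> up; have walk : walk_len e (size p) u (last u p).
  by apply/existsP; exists (in_tuple p); rewrite /= up eqxx.
rewrite /dist; case: (ltnP (size p) #|T|) => [p_lt | p_ge]; last first.
  by apply: leq_trans p_ge; rewrite -[X in _ <= X](size_iota 0) find_size.
rewrite leqNgt; apply/negP => /(before_find 0).
by rewrite nth_iota //= add0n walk.
Qed.

Lemma geodesic_exists :
  connected_graph e -> forall u v, exists p, geodesic u p && (last u p == v).
Proof.
move=> conn u v; have /connectP [p up ->] := conn u v.
have [q uq uniq_q _] := shortenP up.
have q_lt : size q < #|T| by have := max_card (mem (u :: q)); rewrite (card_uniqP uniq_q) /=.
have walk : walk_len e (size q) u (last u q).
  by apply/existsP; exists (in_tuple q); rewrite /= uq eqxx.
have has_walk : has (fun k => walk_len e k u (last u q)) (iota 0 #|T|).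
  by apply/hasP; exists (size q); rewrite ?mem_iota.
have dist_lt : dist e u (last u q) < #|T| by move: has_walk; rewrite has_find size_iota.
have := nth_find 0 has_walk; rewrite -/(dist e u (last u q)) nth_iota // add0n.
case/existsP=> t /andP [ut /eqP tq]; exists t.
by rewrite /geodesic ut tq size_tuple !eqxx.
Qed.

Lemma dist_le_diam u v : dist e u v <= diam e.
Proof.
apply: leq_trans (leq_bigmax (F := fun v => dist e u v) v) _.
exact: (leq_bigmax (F := fun u => \max_(v : T) dist e u v) u).
Qed.

Lemma diam_gt0 : connected_graph e -> 1 < #|T| -> 0 < diam e.
Proof.
move=> conn /card_gt1P [u [v [_ _ uv]]].
have [p /andP [/andP [_ /eqP psize] /eqP pv]] := geodesic_exists conn u v.
apply: leq_trans (dist_le_diam u v); rewrite -pv -psize.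
by case: p pv {psize} => //= vu; rewrite vu eqxx in uv.
Qed.

Lemma last_take_drop (u : T) p i : last (last u (take i p)) (drop i p) = last u p.
Proof. by rewrite -last_cat cat_take_drop. Qed.

Lemma path_drop u p i : path e u p -> path e (last u (take i p)) (drop i p).
Proof. by rewrite -{1}(cat_take_drop i p) cat_path => /andP []. Qed.

(* Two vertices of a geodesic that coincide would yield a shortcut. *)
Lemma geodesic_take_inj u p i j : geodesic u p -> i <= size p -> j <= size p ->
  last u (take i p) = last u (take j p) -> i = j.
Proof.
move=> /andP [up /eqP psize] ip jp Eij.
wlog ij : i j ip jp Eij / i < j.
  move=> wlog_ij; case: (ltngtP i j) => // ij; first exact: wlog_ij.
  exact/esym/(wlog_ij j i).
have := dist_le_size (u := u) (p := take i p ++ drop j p).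
rewrite last_cat Eij last_take_drop cat_path take_path // Eij path_drop //.
by rewrite size_cat size_drop size_takel //; lia.
Qed.

End Geodesics.

Section UnsolvableDistribution.
Variables (T : finType) (e : rel T).
Hypotheses (e_irr : irreflexive e) (e_conn : connected_graph e).
Variables (r : T) (D : distribution T).
Hypothesis D_stuck : ~ rooted_solvable e D r.

Local Notation d := (diam e).
Local Notation P := (2 ^ (diam e - 1)).

Lemma stuck_root_empty : D r = 0.
Proof.
by case: (posnP (D r)) => // Dr; case: D_stuck; exists D; split; first exact: reach_refl.
Qed.

Lemma stuck_lt_dist v : D v < 2 ^ dist e v r.
Proof.
rewrite ltnNge; apply/negP => Dv; apply: D_stuck.
have [p /andP [/andP [vp /eqP psize] /eqP pr]] := geodesic_exists e_conn v r.
rewrite -pr -psize in Dv; rewrite -pr.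
by apply: deliverable_mono (deliverable_path e_irr 1 vp); apply: pile_le; rewrite mul1n.
Qed.

Definition heavy : {set T} := [set v | P <= D v].

Lemma heavy_dist v : v \in heavy -> dist e v r = d.
Proof.
rewrite inE => Dv; have := leq_ltn_trans Dv (stuck_lt_dist v).
by rewrite ltn_exp2l //; have := dist_le_diam e v r; lia.
Qed.

Let geo v := xchoose (geodesic_exists e_conn v r).

Lemma geo_spec v : v \in heavy ->
  [/\ geodesic e v (geo v), path e v (geo v), last v (geo v) = r & size (geo v) = d].
Proof.
move=> /heavy_dist vd.
have /andP [geod /eqP vr] := xchooseP (geodesic_exists e_conn v r).
by have /andP [vp /eqP vsize] := geod; rewrite -/(geo v) vsize vr.
Qed.

Let tracks (x : T * 'I_d) := last x.1 (take x.2 (geo x.1)).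

Lemma heavy_tracks_meet_solvable v w i j : v != w -> v \in heavy -> w \in heavy ->
  i <= j -> j < d -> last v (take i (geo v)) = last w (take j (geo w)) ->
  rooted_solvable e D r.
Proof.
move=> vw vK wK ij jd Evw.
have [_ vp _ vsize] := geo_spec vK; have [_ wp wr wsize] := geo_spec wK.
rewrite /rooted_solvable -wr -(last_take_drop _ _ j).
apply: (deliverable_merge e_irr (c := d - 1) (k := d - 1 - j) vw
  (take_path _ vp) Evw (take_path _ wp) erefl (path_drop _ wp)).
- by rewrite !size_takel ?vsize ?wsize //; lia.
- by rewrite size_takel ?wsize; lia.
- by rewrite size_drop wsize; lia.
- by rewrite inE in vK.
- by rewrite inE in wK.
Qed.

Lemma tracks_inj : {in setX heavy [set: 'I_d] &, injective tracks}.
Proof.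
move=> [v i] [w j]; rewrite !in_setX !in_setT !andbT /tracks /= => vK wK Evw.
case: (v =P w) => [Ev | /eqP vw].
  have [vgeo _ _ vsize] := geo_spec vK.
  subst w; congr pair; apply/val_inj/(geodesic_take_inj vgeo) => //;
  by rewrite vsize; apply: ltnW; apply: ltn_ord.
case: D_stuck; case: (leqP i j) => ij.
  exact: heavy_tracks_meet_solvable vw vK wK ij (ltn_ord j) Evw.
by apply: heavy_tracks_meet_solvable wK vK (ltnW ij) (ltn_ord i) (esym Evw); rewrite eq_sym.
Qed.

Lemma heavy_card : #|heavy| * d <= #|T| - 1.
Proof.
have tracks_sub : tracks @: setX heavy [set: 'I_d] \subset [set~ r].
  apply/subsetP => y /imsetP [[v i]]; rewrite in_setX in_setT andbT => vK ->.
  have [geod _ vr vsize] := geo_spec vK.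
  rewrite !inE /tracks /=; apply/eqP => Er.
  have i_lt : i < size (geo v) by rewrite vsize.
  have := geodesic_take_inj geod (ltnW i_lt) (leqnn _).
  by rewrite take_size Er vr => /(_ erefl) Ei; rewrite Ei ltnn in i_lt.
have := subset_leq_card tracks_sub.
by rewrite card_in_imset ?cardsX ?cardsT ?card_ord ?cardsC1 ?subn1 //; exact: tracks_inj.
Qed.

Lemma stuck_dsize : dsize D <= (#|T| - 1) * (P - 1) + #|heavy| * P.
Proof.
rewrite /dsize (bigD1 r) //= stuck_root_empty add0n.
apply: (@leq_trans (\sum_(v | v != r) ((P - 1) + (if v \in heavy then P else 0)))).
  apply: leq_sum => v _; have Dv := stuck_lt_dist v.
  have dist_P : 2 ^ dist e v r <= 2 * P.
    by rewrite -expnS leq_pexp2l //; have := dist_le_diam e v r; lia.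
  by rewrite inE; case: (leqP P (D v)); lia.
rewrite big_split /= sum_nat_const cardC1 -subn1 leq_add2l.
apply: leq_trans (_ : \sum_v (if v \in heavy then P else 0) <= _).
  by rewrite [X in _ <= X](bigD1 r) //= leq_addl.
by rewrite -big_mkcond sum_nat_const.
Qed.

End UnsolvableDistribution.

Lemma pebbling_bound_gap n q P : 0 < n -> 0 < P ->
  (n - 1) * (P - 1) + q * P < (n + q - 1) * P - n + 2.
Proof.
move=> n_pos P_pos.
have -> : (n + q - 1) * P = (n - 1) * P + q * P by rewrite -mulnDl; congr (_ * _); lia.
have : n - 1 <= (n - 1) * P by rewrite leq_pmulr.
by rewrite mulnBr muln1; move: ((n - 1) * P) (q * P) => A B; lia.
Qed.

Theorem theorem2 (T : finType) (e : rel T) :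
  simple_graph e -> connected_graph e -> 2 <= #|T| ->
  pebbling_number_le e
    ((#|T| + (#|T| - 1) %/ diam e - 1) * 2 ^ (diam e - 1) - #|T| + 2).
Proof.
move=> [_ e_irr] e_conn n_gt1.
have d_pos := diam_gt0 e_conn n_gt1.
eexists; split=> [|D D_size r]; first exact: leqnn.
apply: NNPP => D_stuck.
have heavy_le : #|heavy e D| <= (#|T| - 1) %/ diam e.
  by rewrite leq_divRL //; apply: heavy_card D_stuck.
have := stuck_dsize e_irr e_conn D_stuck.
move/leq_trans/(_ (leq_add (leqnn _) (leq_mul heavy_le (leqnn _)))).
by rewrite D_size leqNgt pebbling_bound_gap ?expn_gt0 //; lia.
Qed.
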